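(* Let $\mathbb{A}_1\subseteq\cdots\subseteq\mathbb{A}_k$ be a flag of linear subspaces of $\mathbb{R}^n$ and $b\in\mathbb{R}^n$. Then $s_b\bigl(\Omega(\mathbb{A}_1,\dots,\mathbb{A}_k)\bigr)=\{\mathbb{B}+b:\mathbb{B}\in\Omega(\mathbb{A}_1,\dots,\mathbb{A}_k)\}$ is a strong deformation retract of $\Psi(\mathbb{A}_1+b,\dots,\mathbb{A}_k+b)$. In particular, $\Psi(\mathbb{A}_1+b,\dots,\mathbb{A}_k+b)$ is homotopy equivalent to $\tau^{-1}\bigl(\Omega(\mathbb{A}_1,\dots,\mathbb{A}_k)\bigr)$.
   Context: $\mathrm{Graff}(k,n)$ is the manifold of $k$-dimensional affine subspaces of $\mathbb{R}^n$, $\tau:\mathrm{Graff}(k,n)\to\mathrm{Gr}(k,n)$, $\mathbb{A}+c\mapsto\mathbb{A}$, and subsets carry the subspace topology. $\Omega(\mathbb{A}_1,\dots,\mathbb{A}_k)=\{\mathbb{B}\in\mathrm{Gr}(k,n):\dim(\mathbb{B}\cap\mathbb{A}_j)\ge j,\ j=1,\dots,k\}$; $\Psi(\mathbb{A}_1+b,\dots,\mathbb{A}_k+b)=\{\mathbb{B}+c\in\mathrm{Graff}(k,n):\dim((\mathbb{B}+c)\cap(\mathbb{A}_j+b))\ge j,\ j=1,\dots,k\}$; $s_b(\mathbb{B})=\mathbb{B}+b$. *)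

From HB Require Import structures.
From mathcomp Require Import all_boot all_order all_algebra.
From mathcomp Require Import all_classical all_reals all_analysis.
Set Implicit Arguments. Unset Strict Implicit. Unset Printing Implicit Defensive.
Import Order.TTheory GRing.Theory Num.Theory.
Import numFieldNormedType.Exports.
Local Open Scope classical_set_scope.
Local Open Scope ring_scope.

Section Defs.
Variables (R : realType) (n : nat).

Notation vec := 'rV[R]_n.

Definition aff (U : {vspace vec}) (c : vec) : set vec :=
  [set x | x - c \in U].

(** An affine set S has dimension >= j: S is nonempty (empty set has
    dimension -1) and its direction space has dimension >= j. *)
Definition affdim_ge (S : set vec) (j : nat) : Prop :=
  exists (U : {vspace vec}) (c : vec), S = aff U c /\ (j <= \dim U)%N.

(** Orthogonal projector onto U: symmetric idempotent matrix with
    fixed space U (chosen by classical choice; it exists and is unique). *)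
Definition is_orthproj (U : {vspace vec}) (P : 'M[R]_n) : Prop :=
  P^T = P /\ P *m P = P /\ (forall x : vec, (x \in U) = (x *m P == x)).

Definition orthproj (U : {vspace vec}) : 'M[R]_n := xget 0 (is_orthproj U).

(** Ambient space in which Graff(k,n) is (homeomorphically) embedded:
    an affine subspace U + c is sent to (P_U, c - c P_U), i.e. the pair
    (orthogonal projector onto its direction, its point closest to 0).
    This is the standard topology of Graff(k,n), and its restriction to
    the first component is the standard topology of Gr(k,n). *)
Definition amb := ('M[R]_n * 'rV[R]_n)%type.

Definition gemb (U : {vspace vec}) (c : vec) : amb :=
  (orthproj U, c - c *m orthproj U).

Definition graff_subset (k : nat) (Q : set vec -> Prop) : set amb :=
  [set e | exists (U : {vspace vec}) (c : vec),
       \dim U = k /\ Q (aff U c) /\ e = gemb U c].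

Definition Omega (k : nat) (A : nat -> {vspace vec}) (B : {vspace vec}) : Prop :=
  \dim B = k /\ (forall j, (1 <= j <= k)%N -> (j <= \dim (B :&: A j)%VS)%N).

Definition Psi (k : nat) (A : nat -> {vspace vec}) (b : vec) : set amb :=
  graff_subset k (fun S => forall j, (1 <= j <= k)%N ->
                              affdim_ge (S `&` aff (A j) b) j).

Definition sbOmega (k : nat) (A : nat -> {vspace vec}) (b : vec) : set amb :=
  graff_subset k (fun S => exists B, Omega k A B /\ S = aff B b).

Definition tauinvOmega (k : nat) (A : nat -> {vspace vec}) : set amb :=
  graff_subset k (fun S => exists B c, Omega k A B /\ S = aff B c).

End Defs.

Section Topo.
Variables (R : realType) (T : topologicalType).

Definition unit_int : set R := `[0%R, 1%R]%classic.

Definition strong_deformation_retract (X Y : set T) : Prop :=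
  X `<=` Y /\
  exists H : R * T -> T,
    {within unit_int `*` Y, continuous H} /\
    (forall t y, unit_int t -> Y y -> Y (H (t, y))) /\
    (forall y, Y y -> H (0%R, y) = y) /\
    (forall y, Y y -> X (H (1%R, y))) /\
    (forall t x, unit_int t -> X x -> H (t, x) = x).

Definition homotopic_on (X : set T) (f g : T -> T) : Prop :=
  exists H : R * T -> T,
    {within unit_int `*` X, continuous H} /\
    (forall t x, unit_int t -> X x -> X (H (t, x))) /\
    (forall x, X x -> H (0%R, x) = f x) /\
    (forall x, X x -> H (1%R, x) = g x).

Definition homotopy_equivalent (X Y : set T) : Prop :=
  exists f g : T -> T,
    {within X, continuous f} /\ {within Y, continuous g} /\
    f @` X `<=` Y /\ g @` Y `<=` X /\
    homotopic_on X (g \o f) idfun /\ homotopic_on Y (f \o g) idfun.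

End Topo.

(* The homotopy moves only the translation part of a plane: it slides U + c
   to U + ((1 - t) c + t b).  In the coordinates (P_U, c - c P_U) of the
   embedding it reads (P, v) |-> (P, (1 - t) v + t (b - b P)), so it is
   continuous on the whole ambient space.  If d lies on U + c and on A_j + b,
   then (1 - t) d + t b lies on the slid plane and on A_j + b; as a nonempty
   intersection (U + c) ∩ (A_j + b) has direction U ∩ A_j, its dimension
   does not drop and Psi is invariant.  At t = 1 the plane passes through b,
   hence lies in s_b(Omega), and planes through b do not move.  The same
   homotopy deforms tau^-1(Omega) into s_b(Omega), which is contained in
   Psi, itself contained in tau^-1(Omega); so the inclusion of Psi is a
   homotopy equivalence. *)

From HB Require Import structures.
From mathcomp Require Import all_boot all_order all_algebra.
From mathcomp Require Import all_classical all_reals all_analysis.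
Set Implicit Arguments.
Unset Strict Implicit.
Unset Printing Implicit Defensive.
Import Order.TTheory GRing.Theory Num.Theory.
Import numFieldNormedType.Exports.
Local Open Scope classical_set_scope.
Local Open Scope ring_scope.

Lemma mulmx_trmx_eq0 (R : realDomainType) m n (M : 'M[R]_(m, n)) :
  M *m M^T = 0 -> M = 0.
Proof.
move=> MMT0; apply/matrixP => i j; rewrite mxE.
have /eqP := congr1 (fun N : 'M[R]_m => N i i) MMT0.
rewrite !mxE psumr_eq0 => [/allP/(_ j (mem_index_enum j))|k _].
  by rewrite mxE -expr2 sqrf_eq0 => /eqP.
by rewrite mxE -expr2 sqr_ge0.
Qed.

Lemma row_free_gram_unitmx (R : realFieldType) m n (M : 'M[R]_(m, n)) :
  row_free M -> M *m M^T \in unitmx.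
Proof.
move=> freeM; rewrite -row_free_unit -kermx_eq0; apply/eqP.
set K := kermx _; have KM0 : (K *m M) *m (K *m M)^T = 0.
  by rewrite trmx_mul mulmxA -(mulmxA _ M) mulmx_ker mul0mx.
by apply/eqP; rewrite -(mulmx_free_eq0 _ freeM); apply/eqP/mulmx_trmx_eq0.
Qed.

Lemma vspace_row_free_span (K : fieldType) n (U : {vspace 'rV[K]_n}) :
  exists r (M : 'M[K]_(r, n)),
    row_free M /\ forall x : 'rV_n, (x \in U) = (x <= M)%MS.
Proof.
pose X := vbasis U; pose M : 'M[K]_(\dim U, n) := \matrix_(i < \dim U) X`_i.
exists (\rank M), (row_base M); split=> [|x]; first exact: row_base_free.
rewrite (eq_row_base M); apply/idP/idP.
  move=> /coord_vbasis ->; apply/submxP; exists (\row_i coord X i x).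
  by rewrite mulmx_sum_row; apply: eq_bigr => i _; rewrite rowK mxE.
move=> /submxP [y ->]; rewrite mulmx_sum_row; apply: memv_suml => i _.
by rewrite rowK memvZ // vbasis_mem // mem_nth // size_tuple.
Qed.

Section OrthogonalProjection.
Variables (R : realType) (n : nat).
Implicit Types (U : {vspace 'rV[R]_n}) (c d : 'rV[R]_n).

Lemma orthproj_exists U : exists P, is_orthproj U P.
Proof.
have [r [M [freeM UM]]] := vspace_row_free_span U.
pose G := M *m M^T; have unitG : G \in unitmx by exact: row_free_gram_unitmx.
have GK : M *m (M^T *m (invmx G *m M)) = M.
  by rewrite !mulmxA -/G mulmxV ?mul1mx.
exists (M^T *m invmx G *m M); split; [|split].
- by rewrite !trmx_mul trmxK trmx_inv trmx_mul trmxK mulmxA.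
- by rewrite -!mulmxA GK.
move=> x; rewrite UM; apply/idP/eqP => [/submxP [y ->]|<-].
  by rewrite -!mulmxA GK.
by rewrite mulmxA submxMl.
Qed.

Lemma orthprojP U : is_orthproj U (orthproj U).
Proof. exact: xgetPex (orthproj_exists U). Qed.

Lemma orthproj_id U x : x \in U -> x *m orthproj U = x.
Proof. by have [_ [_ ->]] := orthprojP U; move/eqP. Qed.

Lemma gemb_shift U c d : d - c \in U -> gemb U d = gemb U c.
Proof.
move=> dcU; congr pair.
have -> : d *m orthproj U = (d - c) + c *m orthproj U.
  by rewrite -{1}(subrK c d) mulmxDl orthproj_id.
by rewrite opprD addrA subKr.
Qed.

End OrthogonalProjection.

Lemma continuous_mx (K : numFieldType) (T : topologicalType) m n
    (f : T -> 'M[K]_(m, n)) :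
  (forall i j, continuous (fun x => f x i j)) -> continuous f.
Proof.
move=> fij x A /nbhs_ballP [e e0 eA].
have : \forall y \near x, forall i j, ball (f x i j) e (f y i j).
  apply: filter_forall => i; apply: filter_forall => j.
  exact/(fij i j x)/nbhsx_ballx.
by apply: filterS => y fy; apply: eA.
Qed.

Lemma mulmx_continuous (K : numFieldType) m n p (u : 'M[K]_(m, n)) :
  continuous (fun M : 'M[K]_(n, p) => u *m M).
Proof.
apply: continuous_mx => i j; under eq_fun do rewrite mxE.
apply: continuous_big => [|k _ M].
  exact: add_continuous.
exact/continuousM/coord_continuous/cst_continuous.
Qed.

Section ConvexCombination.
Variables (K : pzRingType) (V : lmodType K) (t : K).

Lemma convex_combB (x y z : V) :
  (1 - t) *: x + t *: z - ((1 - t) *: y + t *: z) = (1 - t) *: (x - y).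
Proof. by rewrite opprD addrACA subrr addr0 scalerBr. Qed.

Lemma convex_combBr (x y : V) : (1 - t) *: x + t *: y - y = (1 - t) *: (x - y).
Proof. by rewrite -(convex_combB x y y) -scalerDl subrK scale1r. Qed.

End ConvexCombination.

Section AffineIntersection.
Variables (R : realType) (n : nat).
Implicit Types (U W A : {vspace 'rV[R]_n}) (b c d : 'rV[R]_n).

Lemma aff_center U c : aff U c c.
Proof. by rewrite /aff /= subrr mem0v. Qed.

Lemma aff_shift U c d : d - c \in U -> aff U d = aff U c.
Proof.
move=> dcU; apply/seteqP; split=> x; rewrite /aff /= => xU.
  by have := memvD xU dcU; rewrite addrA subrK.
by have := memvB xU dcU; rewrite opprB addrA subrK.
Qed.

Lemma aff_dir U W c d : aff U c = aff W d -> U = W.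
Proof.
move=> E; have cW : aff W d c by rewrite -E; exact: aff_center.
rewrite -(aff_shift cW) in E; apply/vspaceP => x.
move: (congr1 (@^~ (x + c)) E); rewrite /aff /= addrK => UW.
by apply/idP/idP; rewrite UW.
Qed.

Lemma affI_at U A c b d : aff U c d -> aff A b d ->
  aff U c `&` aff A b = aff (U :&: A) d.
Proof.
move=> dU dA; rewrite -(aff_shift dU) -(aff_shift dA).
apply/seteqP; split=> x; rewrite /aff /= memv_cap.
  by case=> *; apply/andP.
by case/andP.
Qed.

Lemma affdim_ge_affI U A c b j :
  affdim_ge (aff U c `&` aff A b) j <->
  aff U c `&` aff A b !=set0 /\ (j <= \dim (U :&: A))%N.
Proof.
split=> [[W [d [E jW]]]|[[d [dU dA]] jUA]]; last first.
  by exists (U :&: A)%VS, d; rewrite (affI_at dU dA).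
have [dU dA] : (aff U c `&` aff A b) d by rewrite E; exact: aff_center.
by split; [exists d | rewrite -(aff_dir (etrans (esym E) (affI_at dU dA)))].
Qed.

Lemma affI_slide_neq0 U A c b (t : R) : aff U c `&` aff A b !=set0 ->
  aff U ((1 - t) *: c + t *: b) `&` aff A b !=set0.
Proof.
case=> d [dU dA]; exists ((1 - t) *: d + t *: b); split.
  by rewrite /aff /= convex_combB memvZ.
by rewrite /aff /= convex_combBr memvZ.
Qed.

End AffineIntersection.

Section OffsetHomotopy.
Variables (R : realType) (n : nat) (b : 'rV[R]_n).

Definition offset_homotopy (z : R * ('M[R]_n * 'rV[R]_n)) :
  'M[R]_n * 'rV[R]_n :=
  (z.2.1, (1 - z.1) *: z.2.2 + z.1 *: (b - b *m z.2.1)).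

Lemma offset_homotopy_continuous : continuous offset_homotopy.
Proof.
move=> z; have dir_cont : {for z, continuous (fun z : R * _ => z.2.1)}.
  by apply: continuous_comp; [exact: cvg_snd | exact: cvg_fst].
have offset_cont : {for z, continuous (fun z => (offset_homotopy z).2)}.
  apply: continuousD; apply: continuousZ.
  - by apply: continuousB; [exact: cst_continuous | exact: cvg_fst].
  - by apply: continuous_comp; [exact: cvg_snd | exact: cvg_snd].
  - exact: cvg_fst.
  apply: continuousB; first exact: cst_continuous.
  by apply: continuous_comp; [exact: dir_cont | exact: mulmx_continuous].
exact: cvg_pair dir_cont offset_cont.
Qed.

Lemma offset_homotopy0 y : offset_homotopy (0, y) = y.
Proof.
by case: y => P v; rewrite /offset_homotopy /= subr0 scale1r scale0r addr0.
Qed.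

Lemma offset_homotopy_gemb t U c :
  offset_homotopy (t, gemb U c) = gemb U ((1 - t) *: c + t *: b).
Proof.
rewrite /offset_homotopy /gemb /=; congr pair.
by rewrite mulmxDl -!scalemxAl !scalerBr opprD addrACA.
Qed.

Lemma graff_subset_offset_homotopy k (Q : set 'rV[R]_n -> Prop) t y :
  (forall U c, Q (aff U c) -> Q (aff U ((1 - t) *: c + t *: b))) ->
  graff_subset k Q y -> graff_subset k Q (offset_homotopy (t, y)).
Proof.
move=> Qslide [U [c [dimU [QU ->]]]]; rewrite offset_homotopy_gemb.
by exists U, ((1 - t) *: c + t *: b); split; [|split; [exact: Qslide|]].
Qed.

End OffsetHomotopy.

Section SchubertSets.
Variables (R : realType) (n k : nat).
Variables (A : nat -> {vspace 'rV[R]_n}) (b : 'rV[R]_n).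
Local Notation H := (offset_homotopy b).

Lemma Psi_sub_tauinvOmega : Psi k A b `<=` tauinvOmega k A.
Proof.
move=> _ [U [c [dimU [PsiU ->]]]]; exists U, c; do 2 split => //.
exists U, c; do 2 split => //.
by move=> j /PsiU /affdim_ge_affI[].
Qed.

Lemma sbOmega_sub_Psi : sbOmega k A b `<=` Psi k A b.
Proof.
move=> _ [U [c [dimU [[B [[_ OmegaB] E]] ->]]]].
exists U, c; do 2 split => //.
move=> j /OmegaB jB; rewrite E; apply/affdim_ge_affI; split => //.
by exists b; split; exact: aff_center.
Qed.

Lemma Psi_offset_homotopy t y : Psi k A b y -> Psi k A b (H (t, y)).
Proof.
apply: graff_subset_offset_homotopy => U c PsiU j.
move=> /PsiU /affdim_ge_affI[ne jUA].
by apply/affdim_ge_affI; split; first exact: affI_slide_neq0.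
Qed.

Lemma tauinvOmega_offset_homotopy t y :
  tauinvOmega k A y -> tauinvOmega k A (H (t, y)).
Proof.
apply: graff_subset_offset_homotopy => U c [B [d [OmegaB E]]].
by exists U, ((1 - t) *: c + t *: b); rewrite (aff_dir E).
Qed.

Lemma offset_homotopy1_sbOmega y :
  tauinvOmega k A y -> sbOmega k A b (H (1, y)).
Proof.
move=> [U [c [dimU [[B [d [OmegaB E]]] ->]]]].
rewrite offset_homotopy_gemb subrr scale0r add0r scale1r.
by exists U, b; do 2 split => //; exists U; rewrite (aff_dir E).
Qed.

Lemma offset_homotopy_sbOmega t y : sbOmega k A b y -> H (t, y) = y.
Proof.
move=> [U [c [_ [[B [_ E]] ->]]]]; rewrite offset_homotopy_gemb.
have cbU : aff U b c by rewrite (aff_dir E) -E; exact: aff_center.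
by rewrite !(gemb_shift (c := b)) // convex_combBr memvZ.
Qed.

End SchubertSets.

Lemma unit_int_1B (R : realType) (t : R) : unit_int t -> unit_int (1 - t).
Proof. by rewrite /unit_int /= !in_itv /= subr_ge0 gerBl andbC. Qed.

Section Deformation.
Variables (R : realType) (T : topologicalType) (H : R * T -> T).
Hypotheses (H_cont : continuous H) (H0 : forall x, H (0, x) = x).

Lemma homotopic_on_deformation (X : set T) :
  (forall t x, unit_int t -> X x -> X (H (t, x))) ->
  homotopic_on R X (fun x => H (1, x)) idfun.
Proof.
move=> HX; exists (fun z => H (1 - z.1, z.2)); split.
  apply: continuous_subspaceT => z.
  have flip_cont : {for z, continuous (fun z : R * T => (1 - z.1, z.2))}.
    apply: (@cvg_pair _ _ _ _ (nbhs (1 - z.1)) (nbhs z.2)); last exact: cvg_snd.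
    by apply: continuousB; [exact: cst_continuous | exact: cvg_fst].
  by apply: (continuous_comp flip_cont); exact: H_cont.
split; first by move=> t x /unit_int_1B; exact: HX.
by split=> x _ /=; rewrite ?subr0 // subrr H0.
Qed.

Lemma homotopy_equivalent_deformation (Y Z : set T) : Y `<=` Z ->
  (forall t y, unit_int t -> Y y -> Y (H (t, y))) ->
  (forall t z, unit_int t -> Z z -> Z (H (t, z))) ->
  (forall z, Z z -> Y (H (1, z))) ->
  homotopy_equivalent R Y Z.
Proof.
move=> YZ HY HZ H1Z; exists id, (fun z => H (1, z)).
split; first by apply: continuous_subspaceT => y; exact: cvg_id.
split.
  apply: continuous_subspaceT => z.
  have pair1_cont : {for z, continuous (fun z : T => (1 : R, z))}.
    apply: (@cvg_pair _ _ _ _ (nbhs (1 : R)) (nbhs z)); first exact: cvg_cst.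
    exact: cvg_id.
  by apply: (continuous_comp pair1_cont); exact: H_cont.
split; first by move=> _ [y Yy <-]; exact: YZ.
split; first by move=> _ [z Zz <-]; exact: H1Z.
by split; exact: homotopic_on_deformation.
Qed.

End Deformation.

Theorem theorem7p6 (R : realType) (n k : nat)
    (A : nat -> {vspace 'rV[R]_n}) (b : 'rV[R]_n) :
  (forall j, (1 <= j < k)%N -> (A j <= A j.+1)%VS) ->
  strong_deformation_retract R (sbOmega k A b) (Psi k A b) /\
  homotopy_equivalent R (Psi k A b) (tauinvOmega k A).
Proof.
move=> _; split.
  split; first exact: sbOmega_sub_Psi.
  exists (offset_homotopy b).
  split; first exact/continuous_subspaceT/offset_homotopy_continuous.
  split; first by move=> t y _; exact: Psi_offset_homotopy.
  split; first by move=> y _; exact: offset_homotopy0.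
  split; first by move=> y /Psi_sub_tauinvOmega /offset_homotopy1_sbOmega.
  by move=> t x _; exact: offset_homotopy_sbOmega.
apply: (homotopy_equivalent_deformation
         (@offset_homotopy_continuous _ _ b) (offset_homotopy0 b)).
- exact: Psi_sub_tauinvOmega.
- by move=> t y _; exact: Psi_offset_homotopy.
- by move=> t z _; exact: tauinvOmega_offset_homotopy.
- by move=> z /offset_homotopy1_sbOmega /sbOmega_sub_Psi.
Qed.
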